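(* Let $d,M\ge1$, let $\mathcal{X}$ be the set of (represented) graphs with at most $M$ nodes whose node embeddings lie in $\mathbb{R}^d$ with Euclidean norm at most $1$, let $\gamma>0$, let $p$ be a probability distribution over random graphs $G_\omega$, and let $G_{\omega_1},\dots,G_{\omega_R}$ be random graphs. Define $\phi_{G_\omega}(G)=\exp(-\gamma\,\mathrm{EMD}(G,G_\omega))$, $k(G_x,G_y)=\int p(G_\omega)\phi_{G_\omega}(G_x)\phi_{G_\omega}(G_y)\,dG_\omega$, $\tilde{k}(G_x,G_y)=\frac1R\sum_{i=1}^R\phi_{G_{\omega_i}}(G_x)\phi_{G_{\omega_i}}(G_y)$, and $\Delta_R(G_x,G_y)=k(G_x,G_y)-\tilde{k}(G_x,G_y)$. Let $t>0$ and let $\mathcal{E}$ be a $\frac{t}{4\gamma}$-covering of $\mathcal{X}$ with respect to $\mathrm{EMD}$ (i.e. for every $G\in\mathcal{X}$ there is $G'\in\mathcal{E}$ with $\mathrm{EMD}(G,G')\le \frac{t}{4\gamma}$). If $|\Delta_R(G_i,G_j)|\le t$ for all $G_i,G_j\in\mathcal{E}$, then $|\Delta_R(G_x,G_y)|\le 2t$ for all $G_x,G_y\in\mathcal{X}$.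
   Context: A graph $G$ with $n$ nodes is represented by node embeddings $\{\boldsymbol{u}_i\}_{i=1}^n\subset\mathbb{R}^d$ and a weight vector $\boldsymbol{t}^{(G)}\in\mathbb{R}^n_{\ge0}$ with entries summing to $1$. For graphs $G_x$ (embeddings $\boldsymbol{u}_i$, $n_x$ nodes) and $G_y$ (embeddings $\boldsymbol{v}_j$, $n_y$ nodes), $\mathrm{EMD}(G_x,G_y)=\min\{\langle\mathcal{D},\mathcal{T}\rangle : \mathcal{T}\in\mathbb{R}_{+}^{n_x\times n_y},\ \mathcal{T}\mathbf{1}=\boldsymbol{t}^{(G_x)},\ \mathcal{T}^T\mathbf{1}=\boldsymbol{t}^{(G_y)}\}$ with $\mathcal{D}_{ij}=\|\boldsymbol{u}_i-\boldsymbol{v}_j\|_2$; it is a metric. A random graph $G_\omega$ is a collection of $D\in\{1,\dots,D_{\max}\}$ node embedding vectors $\boldsymbol{w}_1,\dots,\boldsymbol{w}_D\in\mathbb{R}^d$ (with node weights summing to $1$), and $p$ is a probability distribution on the space $\bigcup_{D=1}^{D_{\max}}(\mathbb{R}^d)^D$ of such random graphs. *)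

From HB Require Import structures.
From mathcomp Require Import all_boot all_order all_algebra.
From mathcomp Require Import all_classical all_reals all_analysis.
Set Implicit Arguments. Unset Strict Implicit. Unset Printing Implicit Defensive.
Import Order.TTheory GRing.Theory Num.Theory.
Local Open Scope classical_set_scope.
Local Open Scope ring_scope.

Section Graphs.
Variables (R : realType) (d : nat).

Record graph := Graph {
  gsize : nat;
  gemb : 'I_gsize -> 'rV[R]_d;
  gwt : 'I_gsize -> R }.
Arguments gsize : clear implicits.
Arguments gemb : clear implicits.
Arguments gwt : clear implicits.

Definition wf_graph (G : graph) : Prop :=
  (forall i, 0 <= gwt G i) /\ \sum_i gwt G i = 1.

Definition enorm (v : 'rV[R]_d) : R := Num.sqrt (\sum_j v 0 j ^+ 2).

Definition transport_plans (Gx Gy : graph) : set 'M[R]_(gsize Gx, gsize Gy) :=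
  [set T | (forall i j, 0 <= T i j) /\
           (forall i, \sum_j T i j = gwt Gx i) /\
           (forall j, \sum_i T i j = gwt Gy j)].

Definition transport_cost (Gx Gy : graph) (T : 'M[R]_(gsize Gx, gsize Gy)) : R :=
  \sum_i \sum_j enorm (gemb Gx i - gemb Gy j) * T i j.

(* EMD = min over transport plans (attained; written as inf) *)
Definition EMD (Gx Gy : graph) : R :=
  inf (@transport_cost Gx Gy @` @transport_plans Gx Gy).

Definition phi (gamma : R) (Gw G : graph) : R := expR (- (gamma * EMD G Gw)).

Definition in_X (M : nat) (G : graph) : Prop :=
  wf_graph G /\ (gsize G <= M)%N /\ (forall i, enorm (gemb G i) <= 1).

End Graphs.

Definition kernel (R : realType) (d : nat) (dom : measure_display)
  (Om : measurableType dom) (P : probability Om R) (Gw : Om -> graph R d)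
  (gamma : R) (Gx Gy : graph R d) : R :=
  Rintegral P setT (fun w => phi gamma (Gw w) Gx * phi gamma (Gw w) Gy).

Definition kernel_approx (R : realType) (d : nat) (Rn : nat)
  (Gs : 'I_Rn -> graph R d) (gamma : R) (Gx Gy : graph R d) : R :=
  (Rn%:R)^-1 * \sum_(i < Rn) phi gamma (Gs i) Gx * phi gamma (Gs i) Gy.

Definition DeltaR (R : realType) (d : nat) (dom : measure_display)
  (Om : measurableType dom) (P : probability Om R) (Gw : Om -> graph R d)
  (Rn : nat) (ws : 'I_Rn -> Om) (gamma : R) (Gx Gy : graph R d) : R :=
  kernel P Gw gamma Gx Gy - kernel_approx (fun i => Gw (ws i)) gamma Gx Gy.

From Pilot Require Import Defs.
From HB Require Import structures.
From mathcomp Require Import all_boot all_order all_algebra.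
From mathcomp Require Import all_classical all_reals all_analysis.
From mathcomp Require Import measurable_realfun ring lra.
Import Order.TTheory GRing.Theory Num.Theory.
Local Open Scope classical_set_scope.
Local Open Scope ring_scope.

(* EMD is a pseudometric: gluing two transport plans out of a common graph
   gives the triangle inequality.  Hence every feature
   phi_W = exp (- gamma EMD (., W)) takes values in [0, 1] and is
   gamma-Lipschitz, so replacing G_x, G_y by covering points G_i, G_j moves
   each product phi_W(G_x) phi_W(G_y) by at most
   gamma (EMD(G_x, G_i) + EMD(G_y, G_j)) <= t / 2.  Both k and k~ are
   averages of such products, so each moves by at most t / 2, and
   |Delta_R(G_x, G_y)| <= t / 2 + t / 2 + |Delta_R(G_i, G_j)| <= 2 t. *)

Section EuclideanNorm.
Context {R : realType} {d : nat}.
Implicit Types u v w : 'rV[R]_d.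

Lemma sqr_sum_mul_le (a b : 'I_d -> R) :
  (\sum_i a i * b i) ^+ 2 <= (\sum_i a i ^+ 2) * (\sum_i b i ^+ 2).
Proof.
(* Lagrange's identity: twice the gap is \sum_(i, j) (a_i b_j - a_j b_i)^2. *)
have lagrange : \sum_i \sum_j (a i * b j - a j * b i) ^+ 2 =
    2 * ((\sum_i a i ^+ 2) * (\sum_i b i ^+ 2) - (\sum_i a i * b i) ^+ 2).
  have sqr_prod : \sum_i \sum_j a i ^+ 2 * b j ^+ 2
      = (\sum_i a i ^+ 2) * (\sum_i b i ^+ 2).
    by rewrite mulr_suml; apply: eq_bigr => i _; rewrite mulr_sumr.
  have sqr_dot : \sum_i \sum_j (a i * b i) * (a j * b j) = (\sum_i a i * b i) ^+ 2.
    by rewrite expr2 mulr_suml; apply: eq_bigr => i _; rewrite mulr_sumr.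
  transitivity (\sum_i \sum_j a i ^+ 2 * b j ^+ 2 + \sum_i \sum_j a j ^+ 2 * b i ^+ 2
      - 2 * \sum_i \sum_j (a i * b i) * (a j * b j)).
    rewrite -!big_split /= mulr_sumr -sumrB; apply: eq_bigr => i _.
    by rewrite -!big_split /= mulr_sumr -sumrB; apply: eq_bigr => j _; ring.
  by rewrite [\sum_i \sum_j a j ^+ 2 * _]exchange_big /= sqr_prod sqr_dot; ring.
have : 0 <= \sum_i \sum_j (a i * b j - a j * b i) ^+ 2.
  by apply: sumr_ge0 => i _; apply: sumr_ge0 => j _; exact: sqr_ge0.
by rewrite lagrange -subr_ge0; lra.
Qed.

Lemma enorm_ge0 u : 0 <= enorm u.
Proof. exact: sqrtr_ge0. Qed.

Lemma enormN u : enorm (- u) = enorm u.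
Proof. by rewrite /enorm; congr Num.sqrt; apply: eq_bigr => j _; rewrite mxE sqrrN. Qed.

Lemma enormD u v : enorm (u + v) <= enorm u + enorm v.
Proof.
rewrite /enorm; set su := \sum_j u 0 j ^+ 2; set sv := \sum_j v 0 j ^+ 2.
have su0 : 0 <= su by apply: sumr_ge0 => j _; exact: sqr_ge0.
have sv0 : 0 <= sv by apply: sumr_ge0 => j _; exact: sqr_ge0.
have dot_le : \sum_j u 0 j * v 0 j <= Num.sqrt su * Num.sqrt sv.
  rewrite -sqrtrM // (le_trans (ler_norm _)) // -sqrtr_sqr.
  exact/ler_wsqrtr/sqr_sum_mul_le.
have -> : \sum_j (u + v) 0 j ^+ 2 = su + sv + 2 * \sum_j u 0 j * v 0 j.
  by rewrite /su /sv mulr_sumr -!big_split /=; apply: eq_bigr => j _; rewrite mxE; ring.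
rewrite -[X in _ <= X]ger0_norm ?addr_ge0 ?sqrtr_ge0 // -sqrtr_sqr.
by apply: ler_wsqrtr; rewrite sqrrD !sqr_sqrtr //; lra.
Qed.

Lemma enorm_distC u v : enorm (u - v) = enorm (v - u).
Proof. by rewrite -enormN opprB. Qed.

Lemma enorm_distD u v w : enorm (u - w) <= enorm (u - v) + enorm (v - w).
Proof. by have := enormD (u - v) (v - w); rewrite addrA subrK. Qed.

End EuclideanNorm.

Section TransportPlans.
Context {R : realType} {d : nat}.
Implicit Types A B C : graph R d.

Lemma transport_cost_ge0 {A B} {T : 'M[R]_(gsize A, gsize B)} :
  transport_plans T -> 0 <= transport_cost T.
Proof.
move=> [T0 _]; apply: sumr_ge0 => i _; apply: sumr_ge0 => j _.
by rewrite mulr_ge0 ?enorm_ge0.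
Qed.

Lemma transport_plans_nonempty {A B} : wf_graph A -> wf_graph B ->
  exists T : 'M[R]_(gsize A, gsize B), transport_plans T.
Proof.
move=> [A0 A1] [B0 B1].
exists (\matrix_(i, j) (gwt i * gwt j)); split; [|split].
- by move=> i j; rewrite mxE mulr_ge0.
- by move=> i; under eq_bigr do rewrite mxE; rewrite -mulr_sumr B1 mulr1.
- by move=> j; under eq_bigr do rewrite mxE; rewrite -mulr_suml A1 mul1r.
Qed.

Lemma EMD_le_cost {A B} {T : 'M[R]_(gsize A, gsize B)} :
  transport_plans T -> EMD A B <= transport_cost T.
Proof.
move=> hT; apply: ge_inf; last by exists T.
by exists 0 => _ [T' hT' <-]; exact: transport_cost_ge0.
Qed.

Lemma lb_le_EMD A B (x : R) : wf_graph A -> wf_graph B ->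
  (forall T : 'M[R]_(gsize A, gsize B), transport_plans T -> x <= transport_cost T) ->
  x <= EMD A B.
Proof.
move=> wA wB lb; have [T hT] := transport_plans_nonempty wA wB.
by apply: lb_le_inf => [|_ [T' hT' <-]]; [exists (transport_cost T), T | exact: lb].
Qed.

Lemma EMD_ge0 {A B} : wf_graph A -> wf_graph B -> 0 <= EMD A B.
Proof. by move=> wA wB; apply: lb_le_EMD => // T; exact: transport_cost_ge0. Qed.

Lemma transport_plans_tr {A B} {T : 'M[R]_(gsize A, gsize B)} :
  transport_plans T -> transport_plans T^T.
Proof.
move=> [T0 [rowT colT]]; split; [|split] => [i j|j|i]; rewrite ?mxE //.
- by under eq_bigr do rewrite mxE; exact: colT.
- by under eq_bigr do rewrite mxE; exact: rowT.
Qed.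

Lemma transport_cost_tr A B (T : 'M[R]_(gsize A, gsize B)) :
  transport_cost T^T = transport_cost T.
Proof.
rewrite /transport_cost exchange_big; apply: eq_bigr => i _.
by apply: eq_bigr => j _; rewrite mxE enorm_distC.
Qed.

Lemma EMD_sym A B : EMD A B = EMD B A.
Proof.
suff costs_tr C D : @transport_cost _ _ C D @` @transport_plans _ _ C D
                    `<=` @transport_cost _ _ D C @` @transport_plans _ _ D C.
  by rewrite /EMD; congr inf; apply/seteqP; split; exact: costs_tr.
move=> _ [T hT <-]; exists T^T; first exact: transport_plans_tr.
exact: transport_cost_tr.
Qed.

(* A plan entry vanishes on a row of zero weight, so dividing by that weight
   and multiplying back is harmless even though x / 0 = 0. *)
Lemma transport_plan_mulfK A B (T : 'M[R]_(gsize A, gsize B)) i j :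
  transport_plans T -> T i j * gwt i / gwt i = T i j.
Proof.
move=> [T0 [rowT _]]; have [wi0|wi_neq0] := eqVneq (gwt i) 0; last by rewrite mulfK.
rewrite wi0 mulr0 mul0r; apply/esym.
have := psumr_eq0P (P := xpredT) (F := fun j => T i j) (fun j _ => T0 i j).
by rewrite rowT wi0 => /(_ erefl j isT).
Qed.

Section Gluing.
Context {A B C : graph R d}.
Context {T1 : 'M[R]_(gsize A, gsize B)} {T2 : 'M[R]_(gsize A, gsize C)}.
Hypotheses (plan1 : transport_plans T1) (plan2 : transport_plans T2).

(* The gluing of T1 and T2 along their common marginal [gwt] on A. *)
Definition glue_weight i j k : R := T1 i j * T2 i k / gwt i.

Definition glue_plan : 'M[R]_(gsize B, gsize C) :=
  \matrix_(j, k) \sum_i glue_weight i j k.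

Lemma glue_weight_ge0 i j k : 0 <= glue_weight i j k.
Proof.
have [T10 [rowT1 _]] := plan1; have [T20 _] := plan2.
by rewrite divr_ge0 ?mulr_ge0 // -rowT1 sumr_ge0.
Qed.

Lemma sum_glue_weight_r i j : \sum_k glue_weight i j k = T1 i j.
Proof.
have [_ [rowT2 _]] := plan2.
by rewrite -mulr_suml -mulr_sumr rowT2 transport_plan_mulfK.
Qed.

Lemma sum_glue_weight_l i k : \sum_j glue_weight i j k = T2 i k.
Proof.
have [_ [rowT1 _]] := plan1.
by rewrite -!mulr_suml rowT1 [gwt i * _]mulrC transport_plan_mulfK.
Qed.

Lemma glue_plan_is_plan : transport_plans glue_plan.
Proof.
have [_ [_ colT1]] := plan1; have [_ [_ colT2]] := plan2.
split; [|split] => [j k|j|k]; rewrite ?mxE.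
- by apply: sumr_ge0 => i _; exact: glue_weight_ge0.
- under eq_bigr do rewrite mxE.
  by rewrite exchange_big -colT1; apply: eq_bigr => i _; exact: sum_glue_weight_r.
- under eq_bigr do rewrite mxE.
  by rewrite exchange_big -colT2; apply: eq_bigr => i _; exact: sum_glue_weight_l.
Qed.

Lemma glue_plan_cost_le :
  transport_cost glue_plan <= transport_cost T1 + transport_cost T2.
Proof.
have via_A i j k : enorm (gemb j - gemb k) * glue_weight i j k
    <= enorm (gemb i - gemb j) * glue_weight i j k
       + enorm (gemb i - gemb k) * glue_weight i j k.
  rewrite -mulrDl; apply: ler_wpM2r; first exact: glue_weight_ge0.
  by rewrite (le_trans (enorm_distD _ (gemb i) _)) // enorm_distC.
have cost_glue : transport_cost glue_plan
    = \sum_i \sum_j \sum_k enorm (gemb j - gemb k) * glue_weight i j k.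
  rewrite /transport_cost [RHS]exchange_big /=; apply: eq_bigr => j _.
  rewrite [RHS]exchange_big /=; apply: eq_bigr => k _.
  by rewrite mxE mulr_sumr.
rewrite cost_glue /transport_cost -big_split /=; apply: ler_sum => i _.
apply: (@le_trans _ _ (\sum_j \sum_k
   (enorm (gemb i - gemb j) * glue_weight i j k
    + enorm (gemb i - gemb k) * glue_weight i j k))).
  by apply: ler_sum => j _; apply: ler_sum => k _; exact: via_A.
under [leLHS]eq_bigr do rewrite big_split.
rewrite big_split [X in _ + X <= _]exchange_big /=.
under [X in X + _ <= _]eq_bigr do rewrite -mulr_sumr sum_glue_weight_r.
by under [X in _ + X <= _]eq_bigr do rewrite -mulr_sumr sum_glue_weight_l.
Qed.

End Gluing.

Lemma EMD_triangle {A B C} : wf_graph A -> wf_graph B -> wf_graph C ->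
  EMD A C <= EMD A B + EMD B C.
Proof.
move=> wA wB wC; rewrite [EMD A B]EMD_sym -lerBlDr.
apply: lb_le_EMD => // T1 plan1; rewrite lerBlDr -lerBlDl.
apply: lb_le_EMD => // T2 plan2; rewrite lerBlDl.
exact: (le_trans (EMD_le_cost (glue_plan_is_plan plan1 plan2))
                 (glue_plan_cost_le plan1 plan2)).
Qed.

Lemma EMD_dist_le {A B W} : wf_graph A -> wf_graph B -> wf_graph W ->
  `|EMD A W - EMD B W| <= EMD A B.
Proof.
move=> wA wB wW; have := EMD_triangle wA wB wW; have := EMD_triangle wB wA wW.
by rewrite (EMD_sym B A) ler_norml => ? ?; apply/andP; split; lra.
Qed.

End TransportPlans.

Lemma expR_dist_le {R : realType} (u v : R) :
  u <= 0 -> v <= 0 -> `|expR u - expR v| <= `|u - v|.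
Proof.
wlog uv : u v / u <= v.
  move=> sym u0 v0; have [uv|/ltW vu] := leP u v; first exact: sym.
  by rewrite distrC [`|u - v|]distrC; exact: sym.
move=> u0 v0; rewrite distrC [`|u - v|]distrC !ger0_norm ?subr_ge0 ?ler_expR //.
(* expR v - expR u = expR v (1 - expR (u - v)) and 1 - expR (u - v) <= v - u *)
have -> : expR u = expR v * expR (u - v) by rewrite -expRD addrC subrK.
have := expR_ge1Dx (u - v); have : expR v <= 1 by rewrite expR_le1.
have := expR_ge0 v; have : expR (u - v) <= 1 by rewrite expR_le1 subr_le0.
nra.
Qed.

Lemma dist_mul_le {R : numDomainType} (a b c e : R) :
  0 <= b <= 1 -> 0 <= c <= 1 -> `|a * b - c * e| <= `|a - c| + `|b - e|.
Proof.
move=> /andP[b0 b1] /andP[c0 c1].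
have -> : a * b - c * e = (a - c) * b + c * (b - e) by ring.
apply: (le_trans (ler_normD _ _)); apply: lerD; rewrite normrM.
- by rewrite (ger0_norm b0) ler_piMr.
- by rewrite (ger0_norm c0) ler_piMl.
Qed.

Section Features.
Context {R : realType} {d : nat} {gamma : R}.
Hypothesis gamma_ge0 : 0 <= gamma.
Implicit Types G W : graph R d.

Lemma phi_ge0_le1 {W G} : wf_graph W -> wf_graph G -> 0 <= phi gamma W G <= 1.
Proof.
move=> wW wG; rewrite /phi expR_ge0 /= expR_le1 oppr_le0.
by rewrite mulr_ge0 // EMD_ge0.
Qed.

Lemma phi_dist_le {W G G'} : wf_graph W -> wf_graph G -> wf_graph G' ->
  `|phi gamma W G - phi gamma W G'| <= gamma * EMD G G'.
Proof.
move=> wW wG wG'; have exponent_le0 H : wf_graph H -> - (gamma * EMD H W) <= 0.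
  by move=> wH; rewrite oppr_le0 mulr_ge0 // EMD_ge0.
rewrite /phi (le_trans (expR_dist_le _ _ (exponent_le0 _ wG) (exponent_le0 _ wG'))) //.
rewrite opprK addrC -mulrBr normrM (ger0_norm gamma_ge0) distrC.
by rewrite ler_wpM2l // EMD_dist_le.
Qed.

End Features.

Section BoundedIntegrals.
Context {R : realType} {dom : measure_display} {Om : measurableType dom}.
Variable P : probability Om R.

Lemma bounded_integrable {f : Om -> R} {c : R} :
  measurable_fun setT f -> (forall w, `|f w| <= c) -> P.-integrable setT (EFin \o f).
Proof.
move=> mf f_le; apply: measurable_bounded_integrable => //.
  by have := probability_setT P; rewrite /= => ->; rewrite ltry.
rewrite /bounded_near; near=> M => w _ /=; apply: le_trans (f_le w) _.
by near: M; apply: nbhs_pinfty_ge; exact: num_real.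
Unshelve. all: end_near. Qed.

Lemma normr_Rintegral_le (f : Om -> R) (c : R) :
  measurable_fun setT f -> (forall w, `|f w| <= c) -> `|Rintegral P setT f| <= c.
Proof.
move=> mf f_le; have intf := bounded_integrable mf f_le.
apply: le_trans (le_normr_Rintegral measurableT intf) _.
have -> : c = Rintegral P setT (fun _ => c).
  rewrite Rintegral_cst //.
  by have := probability_setT P; rewrite /= => ->; rewrite mulr1.
apply: le_Rintegral => //.
- apply: (bounded_integrable (c := c)); first exact: measurableT_comp.
  by move=> w; rewrite normr_id.
- by apply: (bounded_integrable (c := `|c|)).
Qed.

End BoundedIntegrals.

Lemma ler_dist_shift {R : numDomainType} {a b a' b' c e : R} :
  `|a - a'| <= c -> `|b - b'| <= c -> `|a' - b'| <= e -> `|a - b| <= c + c + e.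
Proof.
move=> aa' bb' a'b'; rewrite addrAC -addrA.
apply: le_trans (ler_distD a' a b) _; apply: lerD => //.
by apply: le_trans (ler_distD b' a' b) _; rewrite distrC in bb'; exact: lerD.
Qed.

Lemma normr_avg_le {R : realFieldType} (n : nat) (F : 'I_n -> R) (c : R) :
  0 <= c -> (forall k, `|F k| <= c) -> `|n%:R^-1 * \sum_(k < n) F k| <= c.
Proof.
move=> c0 F_le; case: n F F_le => [|n] F F_le; first by rewrite big_ord0 mulr0 normr0.
rewrite normrM ger0_norm // ler_pdivrMl ?ltr0n //.
apply: le_trans (ler_norm_sum _ _ _) _.
apply: le_trans (ler_sum _ (fun k _ => F_le k)) _.
by rewrite sumr_const card_ord mulr_natl.
Qed.

Section KernelStability.
Context {R : realType} {d : nat} {gamma : R}.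
Hypothesis gamma_ge0 : 0 <= gamma.
Context {x y x' y' : graph R d}.
Hypotheses (wx : wf_graph x) (wy : wf_graph y) (wx' : wf_graph x') (wy' : wf_graph y').

Lemma phi_mul_dist_le W : wf_graph W ->
  `|phi gamma W x * phi gamma W y - phi gamma W x' * phi gamma W y'|
    <= gamma * EMD x x' + gamma * EMD y y'.
Proof.
move=> wW; rewrite (le_trans (dist_mul_le _ _ _ _ (phi_ge0_le1 gamma_ge0 wW wy)
                                 (phi_ge0_le1 gamma_ge0 wW wx'))) //.
by rewrite lerD // phi_dist_le.
Qed.

Lemma kernel_approx_dist_le {n : nat} {Gs : 'I_n -> graph R d} :
  (forall k, wf_graph (Gs k)) ->
  `|kernel_approx Gs gamma x y - kernel_approx Gs gamma x' y'|
    <= gamma * EMD x x' + gamma * EMD y y'.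
Proof.
move=> Gs_wf; rewrite /kernel_approx -mulrBr -sumrB.
apply: normr_avg_le => [|k]; first by rewrite addr_ge0 // mulr_ge0 // EMD_ge0.
exact: phi_mul_dist_le.
Qed.

Context {dom : measure_display} {Om : measurableType dom}.
Variable P : probability Om R.
Context {Gw : Om -> graph R d}.
Hypothesis Gw_wf : forall w, wf_graph (Gw w).
Hypothesis EMD_Gw_measurable : forall G, measurable_fun setT (fun w => EMD G (Gw w)).

Lemma measurable_phi G : measurable_fun setT (fun w => phi gamma (Gw w) G).
Proof.
have -> : (fun w => phi gamma (Gw w) G)
          = expR \o ( *%R (- gamma) \o (fun w => EMD G (Gw w))).
  by apply: funext => w; rewrite /phi /= mulNr.
exact: measurableT_comp (@measurable_expR R)
         (measurableT_comp (mulrl_measurable _) (EMD_Gw_measurable G)).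
Qed.

Lemma measurable_phi_mul G G' :
  measurable_fun setT (fun w => phi gamma (Gw w) G * phi gamma (Gw w) G').
Proof. exact: measurable_funM (measurable_phi G) (measurable_phi G'). Qed.

Lemma normr_phi_mul_le1 G G' w : wf_graph G -> wf_graph G' ->
  `|phi gamma (Gw w) G * phi gamma (Gw w) G'| <= 1.
Proof.
move=> wG wG'; have /andP[p0 p1] := phi_ge0_le1 gamma_ge0 (Gw_wf w) wG.
have /andP[q0 q1] := phi_ge0_le1 gamma_ge0 (Gw_wf w) wG'.
by rewrite normrM !ger0_norm // mulr_ile1.
Qed.

Lemma kernel_dist_le :
  `|Defs.kernel P Gw gamma x y - Defs.kernel P Gw gamma x' y'|
    <= gamma * EMD x x' + gamma * EMD y y'.
Proof.
have int_phi_mul G G' : wf_graph G -> wf_graph G' ->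
    P.-integrable setT (EFin \o fun w => phi gamma (Gw w) G * phi gamma (Gw w) G').
  by move=> wG wG'; apply: (bounded_integrable P (c := 1)) => [|w];
    [exact: measurable_phi_mul | exact: normr_phi_mul_le1].
rewrite /Defs.kernel -RintegralB ?int_phi_mul //.
apply: normr_Rintegral_le => [|w].
  exact: measurable_funB (measurable_phi_mul _ _) (measurable_phi_mul _ _).
exact: phi_mul_dist_le.
Qed.

End KernelStability.

Theorem proposition4p2 (R : realType) (d M Dmax : nat)
  (hd : (0 < d)%N) (hM : (0 < M)%N)
  (dom : measure_display) (Om : measurableType dom) (P : probability Om R)
  (Gw : Om -> graph R d)
  (hGw : forall w, wf_graph (Gw w) /\ (1 <= gsize (Gw w) <= Dmax)%N)
  (hmeas : forall G : graph R d, measurable_fun setT (fun w => EMD G (Gw w)))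
  (gamma : R) (hgamma : 0 < gamma)
  (Rn : nat) (ws : 'I_Rn -> Om)
  (t : R) (ht : 0 < t)
  (E : set (graph R d)) (hEwf : forall G, E G -> wf_graph G)
  (hcov : forall G, in_X M G -> exists2 G', E G' & EMD G G' <= t / (4 * gamma))
  (hE : forall Gi Gj, E Gi -> E Gj -> `|DeltaR P Gw ws gamma Gi Gj| <= t) :
  forall Gx Gy, in_X M Gx -> in_X M Gy -> `|DeltaR P Gw ws gamma Gx Gy| <= 2 * t.
Proof.
move=> Gx Gy hx hy; have [wx wy] := (hx.1, hy.1).
have [Gi Ei near_xi] := hcov Gx hx; have [Gj Ej near_yj] := hcov Gy hy.
have [wi wj] := (hEwf Gi Ei, hEwf Gj Ej).
have Gw_wf w := (hGw w).1.
have scaled_le (G G' : graph R d) :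
    EMD G G' <= t / (4 * gamma) -> gamma * EMD G G' <= t / 4.
  move=> close; apply: le_trans (ler_wpM2l (ltW hgamma) close) _.
  by rewrite mulrCA invfM [gamma * _]mulrCA mulfV ?gt_eqF // mulr1.
have dk := kernel_dist_le (ltW hgamma) wx wy wi wj P Gw_wf hmeas.
have dka := kernel_approx_dist_le (ltW hgamma) wx wy wi wj (fun k => Gw_wf (ws k)).
apply: le_trans (ler_dist_shift dk dka (hE Gi Gj Ei Ej)) _.
move: (scaled_le _ _ near_xi) (scaled_le _ _ near_yj).
by move: (gamma * EMD Gx Gi) (gamma * EMD Gy Gj) => ex ey; lra.
Qed.
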